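(* Let $n\ge t\ge1$ and write $n=at+b$ with $a\ge 1$ and $0\le b\le t-1$. Let $X_{n,t}$ be the set of integer sequences $i_1<\cdots<i_a$ such that (1) $(j-1)t+b+1\le i_j\le jt$ for $1\le j\le a$, and (2) $i_{j+1}-i_j\le t$ for $1\le j\le a-1$. Then $|X_{n,t}|=\binom{a+t-b-1}{a}$. *)

From mathcomp Require Import all_boot.
Set Implicit Arguments. Unset Strict Implicit. Unset Printing Implicit Defensive.

(* A sequence i_1 < ... < i_a is represented by s : seq nat of size a with
   i_j = nth 0 s (j-1).  X_{n,t} membership predicate (a, b determined by n, t
   as a = n %/ t, b = n %% t). *)
Definition in_X (n t : nat) (s : seq nat) : bool :=
  let a := n %/ t in let b := n %% t in
  [&& size s == a,
      sorted ltn s,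
      [forall j : 'I_a, ((j * t + b + 1 <= nth 0 s j) && (nth 0 s j <= j.+1 * t))] &
      [forall j : 'I_a, (j.+1 < a) ==> (nth 0 s j.+1 - nth 0 s j <= t)]].

(* Every element of X_{n,t} has entries <= a*t <= n, so it is faithfully
   represented as an a-tuple of elements of 'I_(n.+1). *)
Definition X_nt (n t : nat) : {set (n %/ t).-tuple 'I_n.+1} :=
  [set s | in_X n t (map (@nat_of_ord _) (val s))].

From mathcomp Require Import all_boot zify.

(* The reflection  i_j |-> j (t + 1) - 1 - i_j  (j counted from 1) maps the box
   jt - t + b + 1 <= i_j <= jt onto j - 1 <= y_j <= j - 1 + t - b - 1 and turns the
   gap condition 1 <= i_{j+1} - i_j <= t into 1 <= y_{j+1} - y_j <= t.  For an
   increasing sequence of a values below a + t - b - 1 the box and the upper gap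
   bound hold automatically, so X_{n,t} is in bijection with the a-subsets of
   {0, ..., a + t - b - 2}. *)

Lemma card_in_bij (T T' : finType) (A : {set T}) (B : {set T'})
    (f : T -> T') (g : T' -> T) :
  {in A, forall x, f x \in B} -> {in B, forall y, g y \in A} ->
  {in A, cancel f g} -> {in B, cancel g f} -> #|A| = #|B|.
Proof.
move=> fAB gBA fK gK.
rewrite -(card_in_imset (can_in_inj fK)); apply: eq_card => y.
apply/imsetP/idP => [[x Ax ->] | By]; first exact: fAB.
by exists (g y); rewrite ?gK ?gBA.
Qed.

Lemma in_XP n t s :
  reflect [/\ size s = n %/ t,
     (forall j, j < n %/ t -> j * t + n %% t + 1 <= nth 0 s j <= j.+1 * t) &
     (forall j, j.+1 < n %/ t ->
        nth 0 s j < nth 0 s j.+1 /\ nth 0 s j.+1 - nth 0 s j <= t)]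
   (in_X n t s).
Proof.
apply: (iffP and4P) => [[/eqP sz_s /sortedP lt_s /forallP box /forallP gap] |
                        [sz_s box gap]].
  split=> // j lt_j; first exact: (box (Ordinal lt_j)).
  split; first by apply: lt_s; rewrite sz_s.
  by have := gap (Ordinal (ltnW lt_j)); rewrite /= lt_j.
split; first exact/eqP.
- by apply/(sortedP 0) => i; rewrite sz_s => /gap [].
- by apply/forallP => j; apply: box.
- by apply/forallP => j; apply/implyP => /gap [].
Qed.

Lemma sorted_ltn_nth_addn (s : seq nat) i k : sorted ltn s ->
  i + k < size s -> nth 0 s i + k <= nth 0 s (i + k).
Proof.
move=> /(sortedP 0) lt_s; elim: k => [|k IHk] lt_ik; first by rewrite !addn0.
have := lt_s (i + k); rewrite -addnS => /(_ lt_ik).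
have := IHk ltac:(lia); lia.
Qed.

Lemma sorted_ltn_nth_bounds (s : seq nat) N j : sorted ltn s ->
  all (gtn N) s -> j < size s -> j <= nth 0 s j <= N - size s + j.
Proof.
move=> lt_s /allP lt_N lt_j.
have last_lt : nth 0 s (size s - 1) < N.
  by apply/lt_N/mem_nth; rewrite subn1 ltn_predL (leq_ltn_trans _ lt_j).
have := sorted_ltn_nth_addn s 0 j lt_s; rewrite add0n => /(_ lt_j).
have := sorted_ltn_nth_addn s j (size s - 1 - j) lt_s.
have -> : j + (size s - 1 - j) = size s - 1 by lia.
move=> /(_ ltac:(lia)); lia.
Qed.

Definition flip_entry (t j v : nat) := j.+1 * t.+1 - 1 - v.

Definition flip_tuple {A m} m' t (x : A.-tuple 'I_m) : A.-tuple 'I_m'.+1 :=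
  [tuple inord (flip_entry t i (tnth x i)) | i < A].

Lemma nth_map_val_tuple A m (x : A.-tuple 'I_m) (i : 'I_A) :
  nth 0 (map val x) i = tnth x i.
Proof. by rewrite (nth_map (tnth x i)) ?size_tuple // -tnth_nth. Qed.

Lemma nth_flip_tuple A m m' t (x : A.-tuple 'I_m) j : j < A ->
  flip_entry t j (nth 0 (map val x) j) <= m' ->
  nth 0 (map val (flip_tuple m' t x)) j = flip_entry t j (nth 0 (map val x) j).
Proof.
move=> lt_jA; have -> : j = Ordinal lt_jA by [].
by rewrite !nth_map_val_tuple tnth_mktuple => /inordK.
Qed.

Lemma mem_X_nt n t (x : (n %/ t).-tuple 'I_n.+1) :
  (x \in X_nt n t) = in_X n t (map val x).
Proof. by rewrite inE. Qed.

Section Bijection.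

Variables n t N : nat.
Hypotheses (t_gt0 : 0 < t) (defN : n %/ t + t - n %% t - 1 = N.+1).

Local Notation a := (n %/ t).
Local Notation b := (n %% t).

Let lt_bt : b < t := ltn_pmod n t_gt0.

Local Ltac flip_arith :=
  rewrite /flip_entry ?mulSn ?mulnS; move: lt_bt defN (divn_eq n t); nia.

Definition sorted_tuples := [set y : a.-tuple 'I_N.+1 | sorted ltn (map val y)].

Lemma sorted_tuplesP (y : a.-tuple 'I_N.+1) :
  reflect (forall j, j.+1 < a -> nth 0 (map val y) j < nth 0 (map val y) j.+1)
          (y \in sorted_tuples).
Proof. by rewrite inE; apply: (iffP (sortedP 0)); rewrite size_map size_tuple. Qed.

Lemma sorted_tuples_bounds (y : a.-tuple 'I_N.+1) : y \in sorted_tuples ->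
  forall j, j < a -> j <= nth 0 (map val y) j <= t - b - 1 + j.
Proof.
rewrite inE => lt_y j lt_ja.
have lt_N : all (gtn N.+1) (map val y).
  by apply/allP => _ /mapP [i _ ->]; rewrite /= ltn_ord.
have := sorted_ltn_nth_bounds _ N.+1 j lt_y lt_N.
by rewrite size_map size_tuple => /(_ lt_ja); have := lt_bt; lia.
Qed.

Lemma flip_X_nt (x : a.-tuple 'I_n.+1) :
  x \in X_nt n t -> flip_tuple N t x \in sorted_tuples.
Proof.
rewrite mem_X_nt => /in_XP [_ box gap]; apply/sorted_tuplesP => j lt_j.
move: (box j (ltnW lt_j)) (box j.+1 lt_j) (gap j lt_j) => box_j box_j1 [lt_x gap_j].
by rewrite !nth_flip_tuple //; flip_arith.
Qed.

Lemma flip_sorted_tuples (y : a.-tuple 'I_N.+1) :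
  y \in sorted_tuples -> flip_tuple n t y \in X_nt n t.
Proof.
move=> sorted_y; have bnd := sorted_tuples_bounds y sorted_y.
move/sorted_tuplesP: sorted_y => lt_y.
rewrite mem_X_nt; apply/in_XP; split.
- by rewrite size_map size_tuple.
- move=> j lt_j; have bnd_j := bnd j lt_j.
  by rewrite nth_flip_tuple //; flip_arith.
- move=> j lt_j.
  move: (bnd j (ltnW lt_j)) (bnd j.+1 lt_j) (lt_y j lt_j) => bnd_j bnd_j1 lt_yj.
  by rewrite !nth_flip_tuple //; flip_arith.
Qed.

Lemma flip_tupleK_X_nt : {in X_nt n t, cancel (flip_tuple N t) (flip_tuple n t)}.
Proof.
move=> x; rewrite mem_X_nt => /in_XP [_ box _].
apply: eq_from_tnth => i; rewrite !tnth_mktuple; apply: val_inj.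
have := box i (ltn_ord i); rewrite nth_map_val_tuple => box_i.
have lt_ia := ltn_ord i.
by rewrite /= !inordK; flip_arith.
Qed.

Lemma flip_tupleK_sorted : {in sorted_tuples, cancel (flip_tuple n t) (flip_tuple N t)}.
Proof.
move=> y sorted_y; apply: eq_from_tnth => i; rewrite !tnth_mktuple; apply: val_inj.
have := sorted_tuples_bounds y sorted_y i (ltn_ord i); rewrite nth_map_val_tuple => bnd_i.
have lt_ia := ltn_ord i.
by rewrite /= !inordK; flip_arith.
Qed.

Lemma card_X_nt_sorted : #|X_nt n t| = 'C(N.+1, a).
Proof.
rewrite -card_ltn_sorted_tuples.
exact: card_in_bij flip_X_nt flip_sorted_tuples flip_tupleK_X_nt flip_tupleK_sorted.
Qed.

End Bijection.

Theorem corollary3p5 (n t a b : nat) :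
  1 <= t -> t <= n -> n = a * t + b -> 1 <= a -> b <= t - 1 ->
  #|X_nt n t| = 'C(a + t - b - 1, a).
Proof.
move=> t_gt0 _ def_n a_gt0 le_b.
have lt_bt : b < t by lia.
have def_a : n %/ t = a by rewrite def_n divnMDl ?divn_small ?addn0 //; lia.
have def_b : n %% t = b by rewrite def_n modnMDl modn_small.
have def_top : a + t - b - 1 = (a + t - b - 2).+1 by lia.
have defN : n %/ t + t - n %% t - 1 = (a + t - b - 2).+1 by rewrite def_a def_b.
by rewrite (card_X_nt_sorted _ _ _ t_gt0 defN) def_a def_top.
Qed.
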